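(* There exist $\varepsilon_0>0$ and $n_0$ such that for every $\varepsilon\in(0,\varepsilon_0]$ and $n\ge n_0$ the following holds. Let $G$ be an $\varepsilon$-superextremal two-clique on $n$ vertices with partition $V(G)=A\uplus B$, and let $f,f'$ be two vertex-disjoint edges of $G$ each having one endpoint in $A$ and one in $B$. Then $G$ has a Hamilton cycle containing $f$ and $f'$.
   Context: For $X\subseteq V(G)$, $d(v,X)$ is the number of neighbours of $v$ in $X$. A graph $G$ on $n$ vertices is an $\varepsilon$-superextremal two-clique (with partition $A\uplus B$) if: (A1) $||A|-|B||\le\varepsilon n$; (A2) $d(a,A)\ge(1/2-\varepsilon)n$ for all but at most $\varepsilon n$ vertices $a\in A$; (A3) $d(a,A)\ge(1/4-\varepsilon)n$ for all $a\in A$; (A4) $d(b,B)\ge(1/2-\varepsilon)n$ for all but at most $\varepsilon n$ vertices $b\in B$; (A5) $d(b,B)\ge(1/4-\varepsilon)n$ for all $b\in B$. *)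

From HB Require Import structures.
From mathcomp Require Import all_boot all_order all_algebra.
Set Implicit Arguments. Unset Strict Implicit. Unset Printing Implicit Defensive.
Import Order.TTheory GRing.Theory Num.Theory.

Definition simple_graph (T : finType) (e : rel T) : Prop :=
  symmetric e /\ irreflexive e.

Definition deg_in (T : finType) (e : rel T) (v : T) (X : {set T}) : nat :=
  #|[set x in X | e v x]|.

Local Open Scope ring_scope.

Definition superextremal_two_clique (T : finType) (e : rel T) (eps : rat)
    (A B : {set T}) : Prop :=
  let n : rat := (#|T|)%:R in
  ([disjoint A & B] /\ A :|: B = [set: T]) /\
  [/\ `| (#|A|)%:R - (#|B|)%:R | <= eps * n,
      (#|[set a in A | ((deg_in e a A)%:R < (1/2 - eps) * n)%R]|)%:R <= eps * n,
      (forall a, a \in A -> (1/4 - eps) * n <= (deg_in e a A)%:R),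
      (#|[set b in B | ((deg_in e b B)%:R < (1/2 - eps) * n)%R]|)%:R <= eps * n
    & (forall b, b \in B -> (1/4 - eps) * n <= (deg_in e b B)%:R)].

Local Close Scope ring_scope.

Definition hamilton_cycle (T : finType) (e : rel T) (s : seq T) : Prop :=
  [/\ uniq s, size s = #|T|, 3 <= size s & cycle e s].

Definition cycle_has_edge (T : finType) (s : seq T) (u v : T) : Prop :=
  u \in s /\ v \in s /\ (next s u = v \/ next s v = u).

From HB Require Import structures.
From mathcomp Require Import all_boot all_order all_algebra.
From mathcomp Require Import zify lra.
Import Order.TTheory GRing.Theory Num.Theory.
Set Implicit Arguments. Unset Strict Implicit. Unset Printing Implicit Defensive.

(* Each side X of an eps-superextremal two-clique is nearly complete: every vertex
   has at least (1/4 - eps)n neighbours in X, and all but eps*n vertices of X miss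
   at most n/10 vertices of X ("high" vertices).  Hence X has a Hamilton path
   between any two prescribed vertices: interleave the few low vertices with high
   ones, so that every adjacent pair of the ordering contains a high vertex, then
   remove non-edges one at a time by 2-opt exchanges.  For a non-adjacent pair x y
   with y high, y has so few non-neighbours compared with the neighbours of x that
   some adjacent pair w z satisfies x ~ w and y ~ z, and reversing the segment
   between them trades the pairs xy, wz for the edges xw, yz.  A Hamilton path of
   A from a to a' and one of B from b' to b close up through f' = a'b' and f = ba. *)

Section AdjacentPairs.
Variable T : eqType.
Implicit Types (f r : rel T) (P Q : pred T) (s p q : seq T).

Fixpoint count_adj f s : nat :=
  if s is x :: s' then (if s' is y :: _ then f x y else false) + count_adj f s'
  else 0.

Definition breaks r s := count_adj (fun x y => ~~ r x y) s.

Lemma count_adj_cat2 f p x y q :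
  count_adj f (p ++ x :: y :: q) =
  count_adj f (rcons p x) + f x y + count_adj f (y :: q).
Proof.
elim: p => [|z p IH] /=; first lia.
by rewrite IH; case: p {IH} => [|z' p] /=; lia.
Qed.

Lemma count_adj_rev f s : symmetric f -> count_adj f (rev s) = count_adj f s.
Proof.
move=> fsym; elim: s => [|x [|y s] IH] //.
rewrite rev_cons rev_cons -cats1 -cats1 -catA count_adj_cat2 -rev_cons IH /=.
by rewrite fsym; lia.
Qed.

Lemma count_adj_gt0 f s :
  0 < count_adj f s -> exists p x y q, s = p ++ x :: y :: q /\ f x y.
Proof.
elim: s => [|x [|y s] IH] //=; case fxy: (f x y) => /=.
- by move=> _; exists [::], x, y, s.
- by move/IH => [p [z [w [q [-> fzw]]]]]; exists (x :: p), z, w, q.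
Qed.

Lemma count_le_adj_andl P Q s :
  count P s <= count_adj (fun x y => P x && Q y) s + count (predC Q) s + 1.
Proof.
suff : count P s <= count_adj (fun x y => P x && Q y) s + count (predC Q) (behead s) + 1.
  by case: s => //= x s; lia.
elim: s => [|x [|y s] IH] //=; first by case: (P x).
by move: IH => /=; case: (P x); case: (Q y) => /=; lia.
Qed.

Lemma count_le_adj_andr P Q s :
  count Q s <= count_adj (fun x y => P x && Q y) s + count (predC P) s + 1.
Proof.
suff : count Q (behead s) <= count_adj (fun x y => P x && Q y) s + count (predC P) s.
  by case: s => //= x s; case: (Q x) => /=; lia.
elim: s => [|x [|y s] IH] //=.
by move: IH => /=; case: (P x); case: (Q y) => /=; lia.
Qed.

Lemma breaks_path r x s : (breaks r (x :: s) == 0) = path r x s.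
Proof.
elim: s x => [|y s IH] x //; rewrite /= -IH /breaks /=.
by case: (r x y); rewrite ?add0n ?add1n.
Qed.

Lemma breaks_two_opt r p a b m c d q : symmetric r ->
  breaks r (p ++ a :: b :: m ++ c :: d :: q) + ~~ r a c + ~~ r b d =
  breaks r (p ++ a :: c :: rev m ++ b :: d :: q) + ~~ r a b + ~~ r c d.
Proof.
move=> rsym; rewrite /breaks !count_adj_cat2 -!cat_cons !count_adj_cat2.
have -> : rcons (c :: rev m) b = rev (rcons (b :: m) c) by rewrite rev_rcons rev_cons.
rewrite count_adj_rev; first lia.
by move=> u v; rewrite rsym.
Qed.

Lemma perm_two_opt p a b m c d q :
  perm_eq (p ++ a :: b :: m ++ c :: d :: q) (p ++ a :: c :: rev m ++ b :: d :: q).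
Proof.
rewrite perm_cat2l perm_cons; apply/permP => F.
by rewrite /= !count_cat /= count_rev; lia.
Qed.

End AdjacentPairs.

Section TwoOpt.
Variables (T : eqType) (e : rel T) (x0 : T).
Hypotheses (esym : symmetric e) (eirr : irreflexive e).

(* The last clause records that an exchange only creates adjacent pairs that
   are edges. *)
Definition two_opt_improves (t t' : seq T) :=
  [/\ perm_eq t t', head x0 t' = head x0 t, last x0 t' = last x0 t,
      breaks e t' < breaks e t &
      forall r, symmetric r -> subrel e r -> breaks r t' <= breaks r t].

Lemma two_opt_swap p a b m c d q :
  e a c -> e b d -> ~~ e a b || ~~ e c d ->
  two_opt_improves (p ++ a :: b :: m ++ c :: d :: q)
                   (p ++ a :: c :: rev m ++ b :: d :: q).
Proof.
move=> eac ebd nabcd; split.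
- exact: perm_two_opt.
- by case: p.
- by rewrite !(last_cat, last_cons).
- have := breaks_two_opt p a b m c d q esym; rewrite eac ebd.
  by move: nabcd; case: (e a b); case: (e c d) => //=; lia.
- move=> r rsym er; have := breaks_two_opt p a b m c d q rsym.
  by rewrite (er _ _ eac) (er _ _ ebd); lia.
Qed.

Lemma two_opt_step t p x y q : t = p ++ x :: y :: q -> ~~ e x y ->
  count (predC (e y)) t + 2 <= count (e x) t \/
  count (predC (e x)) t + 2 <= count (e y) t ->
  exists t', two_opt_improves t t'.
Proof.
move=> tE nxy dense; pose g u v := e x u && e y v.
have pos : 0 < count_adj g (rcons p x) + count_adj g (y :: q).
  have gxy : g x y = false by rewrite /g eirr.
  have := count_adj_cat2 g p x y q; rewrite -tE gxy addn0 => <-.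
  have : count (e x) t <= count_adj g t + count (predC (e y)) t + 1.
    exact: count_le_adj_andl.
  have : count (e y) t <= count_adj g t + count (predC (e x)) t + 1.
    exact: count_le_adj_andr.
  lia.
have [/count_adj_gt0|/count_adj_gt0] :
    0 < count_adj g (y :: q) \/ 0 < count_adj g (rcons p x) by lia.
- case=> [[|y' m] [w [z [q' [[yw qE] /andP[exw eyz]]]]]].
    by rewrite yw exw in nxy.
  exists (p ++ x :: w :: rev m ++ y :: z :: q').
  by rewrite tE qE yw; apply: two_opt_swap; rewrite -?yw ?nxy.
- case=> [p' [w [z [q' [pE /andP[exw eyz]]]]]].
  case/lastP: q' pE => [|m c].
    rewrite -cat_rcons cats1 => /rcons_inj[_ zx].
    by rewrite zx esym eyz in nxy.
  rewrite -!rcons_cons -rcons_cat => /rcons_inj[pE _].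
  exists (p' ++ w :: x :: rev m ++ z :: y :: q).
  rewrite tE pE -catA; apply: two_opt_swap; rewrite 1?esym //.
  by rewrite nxy orbT.
Qed.

End TwoOpt.

Section TwoOptDescent.
Variables (T : eqType) (e : rel T) (high : pred T) (x0 : T).
Hypotheses (esym : symmetric e) (eirr : irreflexive e).

Definition edge_or_high := [rel x y | e x y || high x || high y].

Lemma edge_or_high_sym : symmetric edge_or_high.
Proof. by move=> x y /=; rewrite esym orbAC. Qed.

Lemma two_opt_path t :
  (forall x y, x \in t -> y \in t -> high y ->
     count (predC (e y)) t + 2 <= count (e x) t) ->
  breaks edge_or_high t = 0 ->
  exists t', [/\ perm_eq t t', head x0 t' = head x0 t, last x0 t' = last x0 t
               & breaks e t' = 0].
Proof.
have [k] := ubnP (breaks e t); elim: k t => // k IH t lt_k dense edge_or_high0.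
have [no_breaks|/count_adj_gt0[p [x [y [q [tE nxy]]]]]] := posnP (breaks e t).
  by exists t.
have high_xy : high x || high y.
  move: edge_or_high0; rewrite /breaks tE count_adj_cat2 /= (negbTE nxy) /=.
  by case: (high x || high y) => //=; lia.
have xt : x \in t by rewrite tE mem_cat inE eqxx orbT.
have yt : y \in t by rewrite tE mem_cat !inE eqxx !orbT.
have [t1 [perm1 head1 last1 lt1 le1]] : exists t1, two_opt_improves e x0 t t1.
  apply: (two_opt_step x0 esym eirr tE nxy).
  by case/orP: high_xy => [hx|hy]; [right|left]; apply: dense.
have [|||t' [perm' head' last' breaks']] := IH t1.
- exact: leq_trans lt1 _.
- move=> u v; rewrite -!(perm_mem perm1) -!(permP perm1); exact: dense.
- apply/eqP; rewrite -leqn0 -edge_or_high0 le1 //; first exact: edge_or_high_sym.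
  by move=> u v /= ->.
exists t'; split => //; [exact: perm_trans perm1 perm'|congruence|congruence].
Qed.

End TwoOptDescent.

Section Interleave.
Variable T : eqType.

Fixpoint interleave (s1 s2 : seq T) : seq T :=
  match s1, s2 with
  | x1 :: s1', x2 :: s2' => x1 :: x2 :: interleave s1' s2'
  | _, _ => s1 ++ s2
  end.

Lemma perm_interleave s1 s2 : perm_eq (interleave s1 s2) (s1 ++ s2).
Proof.
elim: s1 s2 => [|x1 s1 IH] [|x2 s2] //=; apply/permP => F.
by rewrite /= !count_cat /= (permP (IH s2)) count_cat; lia.
Qed.

Lemma path_interleave (r : rel T) (P : pred T) x s1 s2 y :
  (forall a b, P a || P b -> r a b) -> all P s1 -> size s2 < size s1 ->
  path r x (interleave s1 s2 ++ [:: y]).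
Proof.
move=> rP; elim: s1 s2 x => [|x1 s1 IH] [|x2 s2] x //= /andP[P1 Ps1].
  move=> _; rewrite cats0 (rP x x1) ?P1 ?orbT //=.
  elim: s1 x1 P1 Ps1 {IH} => [|x2 s1 IHs] x1 P1 /=; first by rewrite rP ?P1.
  by case/andP=> P2 Ps1; rewrite rP ?P1 //= IHs.
rewrite ltnS => lt21; rewrite (rP x x1) ?P1 ?orbT //= rP ?P1 //=.
exact: IH.
Qed.

End Interleave.

Lemma cards_sepC (T : finType) (X : {set T}) (P : pred T) :
  #|[set x in X | P x]| + #|[set x in X | ~~ P x]| = #|X|.
Proof.
rewrite -(cardsID [set x | P x] X); congr (_ + _); apply: eq_card => x.
  by rewrite !inE.
by rewrite !inE andbC.
Qed.

Lemma card_sep_count (T : finType) (X : {set T}) (P : pred T) s :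
  uniq s -> s =i X -> #|[set x in X | P x]| = count P s.
Proof.
move=> s_uniq sX; rewrite -size_filter -(card_uniqP (filter_uniq P s_uniq)).
by apply: eq_card => x; rewrite !inE mem_filter sX andbC.
Qed.

Lemma hamilton_path_high (T : finType) (X : {set T}) (high : pred T) (u v : T) :
  u \in X -> v \in X -> u != v -> 2 * #|[set x in X | ~~ high x]| + 3 <= #|X| ->
  exists s, [/\ uniq (u :: s), u :: s =i X, last u s = v &
                path [rel x y | high x || high y] u s].
Proof.
move=> uX vX uv low_le.
pose Y := X :\: [set u; v].
pose hs := enum [set x in Y | high x]; pose ls := enum [set x in Y | ~~ high x].
have perm_s : perm_eq (u :: interleave hs ls ++ [:: v]) (u :: v :: hs ++ ls).
  by rewrite perm_cons perm_catC /= perm_cons perm_interleave.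
exists (interleave hs ls ++ [:: v]); split.
- rewrite (perm_uniq perm_s) /= !inE !mem_cat.
  rewrite !mem_enum !inE !eqxx !orbT /= (negbTE uv) cat_uniq !enum_uniq /= andbT.
  apply/hasPn => x; rewrite !mem_enum !inE => /andP[_ /negbTE nhx].
  by rewrite nhx andbF.
- move=> x; rewrite (perm_mem perm_s) !inE mem_cat !mem_enum !inE.
  have [->|xu] := eqVneq x u; first by rewrite uX.
  have [->|xv] := eqVneq x v; first by rewrite vX orbT.
  by case: (high x); rewrite ?andbT ?andbF ?orbF.
- by rewrite last_cat.
apply: (path_interleave (P := high)) => [a b //||].
  by apply/allP => x; rewrite mem_enum inE => /andP[].
rewrite -!cardE; have := cards_sepC X high.
have : #|[set x in Y | ~~ high x]| <= #|[set x in X | ~~ high x]|.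
  by apply: subset_leq_card; apply/subsetP => x; rewrite !inE => /andP[/andP[_ ->] ->].
have : #|[set x in Y | high x] :|: [set u; v]| <= #|[set x in Y | high x]| + 2.
  have card_uv : #|[set u; v]| = 2 by rewrite cards2 uv.
  by rewrite -card_uv; exact: leq_card_setU.
have : #|[set x in X | high x]| <= #|[set x in Y | high x] :|: [set u; v]|.
  apply: subset_leq_card; apply/subsetP => x; rewrite !inE.
  by case/andP => -> ->; case: (x == u); case: (x == v).
lia.
Qed.

Lemma hamilton_path_dense (T : finType) (e : rel T) (X : {set T}) (d : nat) (u v : T) :
  symmetric e -> irreflexive e -> u \in X -> v \in X -> u != v ->
  (forall x, x \in X -> d + 2 <= deg_in e x X) ->
  2 * #|[set x in X | d < #|[set w in X | ~~ e x w]|]| + 3 <= #|X| ->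
  exists s, [/\ uniq (u :: s), u :: s =i X, last u s = v & path e u s].
Proof.
move=> esym eirr uX vX uv deg_ge low_le.
pose high x := #|[set w in X | ~~ e x w]| <= d.
have [|s0 [uniq_s0 mem_s0 last_s0 path_s0]] := hamilton_path_high uX vX uv (high := high).
  suff -> : [set x in X | ~~ high x] = [set x in X | d < #|[set w in X | ~~ e x w]|].
    by [].
  by apply/setP => x; rewrite !inE ltnNge.
have dense x y : x \in u :: s0 -> y \in u :: s0 -> high y ->
    count (predC (e y)) (u :: s0) + 2 <= count (e x) (u :: s0).
  rewrite !mem_s0 => xX _ hy; rewrite -!(card_sep_count _ uniq_s0 mem_s0).
  by have := deg_ge x xX; rewrite /deg_in /high /= in hy *; lia.
have breaks_s0 : breaks (edge_or_high e high) (u :: s0) = 0.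
  apply/eqP; rewrite breaks_path; apply: (sub_path _ path_s0) => x y.
  by case/orP => high_xy; apply/orP; [left; apply/orP; right|right].
have [[|u' s] [perm_s head_s last_s path_s]] := two_opt_path u esym eirr dense breaks_s0.
  by have := perm_size perm_s.
move: head_s => /= u'u; subst u'; exists s; split.
- by move: uniq_s0; rewrite (perm_uniq perm_s).
- by move=> x; rewrite -(perm_mem perm_s) mem_s0.
- by move: last_s => /= ->.
- by rewrite -breaks_path path_s.
Qed.

Lemma next_adjacent (T : eqType) (p q : seq T) x y :
  uniq (p ++ x :: y :: q) -> next (p ++ x :: y :: q) x = y.
Proof.
move=> pxyq_uniq; rewrite -(next_rot (size p) pxyq_uniq) rot_size_cat.
by rewrite next_nth mem_head /= eqxx.
Qed.

Lemma next_last (T : eqType) (x y : T) s :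
  uniq (x :: rcons s y) -> next (x :: rcons s y) y = x.
Proof.
move=> xsy_uniq; rewrite -(next_rotr 1 xsy_uniq) -rcons_cons rotr1_rcons.
by apply: (@next_adjacent T [::] s y x); rewrite -rotr1_rcons rotr_uniq.
Qed.

Lemma cycle_join_paths (T : eqType) (e : rel T) u su v sv :
  path e u su -> path e v sv -> e (last u su) v -> e (last v sv) u ->
  cycle e ((u :: su) ++ v :: sv).
Proof.
move=> pu pv uv vu.
by rewrite /= rcons_cat cat_path pu /= uv rcons_path pv vu.
Qed.

Lemma hamilton_cycle_join (T : finType) (e : rel T) (A B : {set T}) u su v sv :
  [disjoint A & B] -> A :|: B = [set: T] -> 3 <= #|T| ->
  uniq (u :: su) -> u :: su =i A -> uniq (v :: sv) -> v :: sv =i B ->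
  path e u su -> path e v sv -> e (last u su) v -> e (last v sv) u ->
  [/\ hamilton_cycle e ((u :: su) ++ v :: sv),
      cycle_has_edge ((u :: su) ++ v :: sv) u (last v sv) &
      cycle_has_edge ((u :: su) ++ v :: sv) (last u su) v].
Proof.
move=> AB_disj AB_cover T_large uniq_u mem_u uniq_v mem_v path_u path_v uv vu.
set s := (u :: su) ++ v :: sv.
have mem_s x : x \in s by rewrite mem_cat mem_u mem_v -in_setU AB_cover in_setT.
have uniq_s : uniq s.
  rewrite cat_uniq uniq_u uniq_v andbT; apply/hasPn => x.
  by rewrite mem_v mem_u => /(disjointFl AB_disj) ->.
have size_s : size s = #|T|.
  by rewrite -(card_uniqP uniq_s); apply: eq_card => x; rewrite mem_s.
split; first by split=> //; [rewrite size_s | exact: cycle_join_paths].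
- do 2 (split; first exact: mem_s).
  have sE : s = u :: rcons (su ++ belast v sv) (last v sv).
    by rewrite /s /= [v :: sv]lastI -rcons_cat.
  by right; rewrite sE next_last // -sE.
- do 2 (split; first exact: mem_s).
  have sE : s = belast u su ++ last u su :: v :: sv.
    by rewrite /s [u :: su]lastI cat_rcons.
  by left; rewrite sE next_adjacent // -sE.
Qed.

Local Open Scope ring_scope.

Lemma superextremal_side_dense (T : finType) (e : rel T) (eps : rat)
    (X Y : {set T}) (n : nat) :
  0 < eps -> eps <= 1/100 -> (100 <= n)%N -> (#|X| + #|Y| = n)%N ->
  `|(#|X|)%:R - (#|Y|)%:R| <= eps * n%:R ->
  (#|[set a in X | (deg_in e a X)%:R < (1/2 - eps) * n%:R]|)%:R <= eps * n%:R ->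
  (forall a, a \in X -> (1/4 - eps) * n%:R <= (deg_in e a X)%:R) ->
  (forall x, x \in X -> n %/ 10 + 2 <= deg_in e x X)%N /\
  (2 * #|[set x in X | n %/ 10 < #|[set w in X | ~~ e x w]|]| + 3 <= #|X|)%N.
Proof.
move=> eps_gt0 eps_small n_large nXY A1 A2 A3.
have n_ge : 100 <= n%:R :> rat by rewrite (ler_nat rat 100).
have epsn : eps * n%:R <= n%:R / 100.
  by have := ler_wpM2r (ler0n _ n) eps_small; lra.
have tenth : (n %/ 10)%:R <= n%:R / 10 :> rat.
  by rewrite ler_pdivlMr // -natrM ler_nat leq_divM.
have nXY' : (#|X|)%:R + (#|Y|)%:R = n%:R :> rat by rewrite -natrD nXY.
move: A1; rewrite ler_norml => /andP[A1l A1r].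
split=> [x xX|].
  by rewrite -(ler_nat rat) natrD; have := A3 x xX; lra.
set L := [set x in X | _].
(* A vertex missing more than n/10 vertices of X has degree below
   |X| - n/10 <= (1/2 - eps) n. *)
have low_sparse : L \subset [set a in X | (deg_in e a X)%:R < (1/2 - eps) * n%:R].
  apply/subsetP => x; rewrite !inE => /andP[xX lowx]; rewrite xX /=.
  have : (n < 10 * #|[set w in X | ~~ e x w]|)%N by lia.
  rewrite -(ltr_nat rat) natrM => {}lowx.
  have : (deg_in e x X)%:R + (#|[set w in X | ~~ e x w]|)%:R = (#|X|)%:R :> rat.
    by rewrite -natrD cards_sepC.
  lra.
have := subset_leq_card low_sparse; rewrite -(ler_nat rat) => L_small.
by rewrite -(ler_nat rat) natrD natrM; lra.
Qed.

Local Close Scope ring_scope.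

Theorem mainTheorem8 :
  exists (eps0 : rat) (n0 : nat), (0 < eps0)%R /\
  forall (eps : rat) (T : finType) (e : rel T) (A B : {set T}) (a b a' b' : T),
    (0 < eps)%R -> (eps <= eps0)%R -> n0 <= #|T| ->
    simple_graph e ->
    superextremal_two_clique e eps A B ->
    a \in A -> b \in B -> a' \in A -> b' \in B ->
    e a b -> e a' b' ->
    a != a' -> b != b' ->
    exists s : seq T, hamilton_cycle e s /\
      cycle_has_edge s a b /\ cycle_has_edge s a' b'.
Proof.
exists (1/100)%R, 100; split=> [|eps T e A B a b a' b' eps_gt0 eps_small n_large].
  lra.
move=> [esym eirr] [[AB_disj AB_cover] [A1 A2 A3 A4 A5]] aA bB a'A b'B eab ea'b' aa' bb'.
have nAB : #|A| + #|B| = #|T|.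
  by rewrite -cardsUI AB_cover cardsT (disjoint_setI0 AB_disj) cards0 addn0.
have [degA lowA] := superextremal_side_dense eps_gt0 eps_small n_large nAB A1 A2 A3.
rewrite distrC in A1; rewrite addnC in nAB.
have [degB lowB] := superextremal_side_dense eps_gt0 eps_small n_large nAB A1 A4 A5.
have [sA [uniqA memA lastA pathA]] := hamilton_path_dense esym eirr aA a'A aa' degA lowA.
rewrite eq_sym in bb'.
have [sB [uniqB memB lastB pathB]] := hamilton_path_dense esym eirr b'B bB bb' degB lowB.
have T_large : 3 <= #|T| by apply: leq_trans n_large.
rewrite -lastA in ea'b'; rewrite -lastB esym in eab.
have [ham edge_ab edge_a'b'] :=
  hamilton_cycle_join AB_disj AB_cover T_large uniqA memA uniqB memB pathA pathB ea'b' eab.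
by exists ((a :: sA) ++ b' :: sB); rewrite -lastA -lastB.
Qed.
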